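(* Let $N\ge1$, $i\in\langle N\rangle$ and let $u$ be a word over $\langle N\rangle$ with $|u|\ge 2$. Then the antipode of the interval partition Hopf algebra $\mathcal H^N$ satisfies \[ S_{\mathcal H}(Y_u^i)=\sum_{T\in \mathbf{RT}_u^i}(-1)^{\mathbf v(T)}\,\Lambda_{\uparrow r}(T). \]
   Context: Let $\langle N\rangle=\{1,\dots,N\}$. For a word $u=u(1)\cdots u(p)$ over $\langle N\rangle$ write $|u|=p$. The interval partition Hopf algebra $\mathcal H=\mathcal H^N$ is, as an algebra, the free unital associative complex algebra on generators $Y_u^i$ ($i\in\langle N\rangle$, $|u|\ge 2$); one sets $Y_j^i=\delta_{ij}1$ for single letters $i,j$. Its counit $\varepsilon$ is the algebra homomorphism with $\varepsilon(Y_u^i)=0$, and its comultiplication is the algebra homomorphism $\Delta$ with $\Delta(Y_u^i)=\sum_{q=1}^{p}\sum_{(C_1,\dots,C_q)}\sum_{v\in\langle N\rangle^q} Y_{u|C_1}^{v(1)}\cdots Y_{u|C_q}^{v(q)}\otimes Y_v^i$, where $p=|u|$, the middle sum is over all partitions of $\{1,\dots,p\}$ into $q$ nonempty consecutive intervals $C_1<\dots<C_q$, and $u|C_k$ is the subword of $u$ indexed by $C_k$. It is a connected graded bialgebra with antipode $S_{\mathcal H}$. Trees: a colored planar tree is a finite rooted tree in which the children of each vertex are linearly ordered (left to right) and each vertex $x$ has a color $c(x)\in\langle N\rangle$, up to isomorphism preserving root, child orders and colors. A leaf has no children. A tree is reduced if every non-leaf vertex has at least two children. $\mathbf{RT}_u^i$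 is the set of reduced colored planar trees whose root has color $i$ and whose leaves, read left to right, have colors $u(1),\dots,u(p)$. For a non-leaf vertex $x$ with children $y_1<\dots<y_k$, $Y(x)=Y^{c(x)}_{c(y_1)\cdots c(y_k)}$. $\mathbf v(T)$ is the number of non-leaf vertices. $\Lambda_{\uparrow r}(T)=Y(y_1)\cdots Y(y_r)$ where $y_1,\dots,y_r$ are the non-leaf vertices in the order $\prec_r$ defined by: $x\prec_r y$ iff either $y$ is a proper ancestor of $x$, or, letting $z$ be the nearest common ancestor of $x$ and $y$, the child of $z$ on the path to $x$ lies to the right of the child of $z$ on the path to $y$ (equivalently: postorder with children visited from right to left; the root comes last). *)

From HB Require Import structures.
From mathcomp Require Import all_boot all_order all_algebra.
From mathcomp Require Import reals.
From mathcomp Require Import complex.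
From mathcomp Require Import finmap monalg.
From Stdlib Require List.
Set Implicit Arguments. Unset Strict Implicit. Unset Printing Implicit Defensive.
Import GRing.Theory.
Local Open Scope ring_scope.

(* Colors <N> = {1,...,N} are represented by 'I_N = {0,...,N-1}.
   The generators Y_u^i with |u| >= 2. *)
Definition IPGen (N : nat) := {p : 'I_N * seq 'I_N | (1 < size p.2)%N}.

(* The interval partition Hopf algebra H^N, as an algebra: the free unital
   associative algebra over C = R[i] (R the real numbers, given as a realType)
   on the generators Y_u^i, i.e. the monoid algebra of the free monoid
   on IPGen N. *)
Notation IPH N R := {malg (complex R)[{fmonom (IPGen N)}]}.

Section IPHopf.
Variables (N : nat) (R : realType).
Local Notation H := (IPH N R).

(* Y_w^i for an arbitrary word w: the generator if |w| >= 2,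
   delta_{ij} 1 if w = j is a single letter (0 for the empty word, never used). *)
Definition Yw (i : 'I_N) (w : seq 'I_N) : H :=
  match insub (i, w) : option (IPGen N) with
  | Some g => << fmu g >>
  | None => if w is [:: j] then (i == j)%:R else 0
  end.

(* All ways of cutting a word into nonempty consecutive pieces
   (= all partitions of {1..p} into consecutive intervals C_1 < ... < C_q,
   listed as the sequence of subwords u|C_1, ..., u|C_q). *)
Fixpoint splits (T : Type) (u : seq T) : seq (seq (seq T)) :=
  match u with
  | [::] => [:: [::]]
  | x :: u' =>
      flatten [seq ([:: x] :: ps) ::
                   (if ps is p1 :: r then [:: (x :: p1) :: r] else [::])
              | ps <- splits u']
  end.

(* Delta(Y_u^i), as the list of simple tensors a (x) b (all coefficients 1):
   sum over interval partitions (C_1..C_q) and v in <N>^q of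
   Y_{u|C_1}^{v(1)} ... Y_{u|C_q}^{v(q)} (x) Y_v^i. *)
Definition DeltaGen (i : 'I_N) (u : seq 'I_N) : seq (H * H) :=
  flatten [seq [seq (\prod_(k < size ps) Yw (tnth v k) (nth [::] ps k),
                     Yw i (tval v))
               | v : (size ps).-tuple 'I_N]
          | ps <- splits u].

Definition tensor_mul (s t : seq (H * H)) : seq (H * H) :=
  [seq (a.1 * b.1, a.2 * b.2) | a <- s, b <- t].

(* Delta of a monomial g_1 ... g_k (Delta is an algebra homomorphism),
   as a list of simple tensors. *)
Definition DeltaMon (m : {fmonom (IPGen N)}) : seq (H * H) :=
  foldr (fun g acc => tensor_mul (DeltaGen (sval g).1 (sval g).2) acc)
        [:: (1, 1)] (fmonom_val m).

(* m o (f (x) g) o Delta, for linear maps f g : H -> H. *)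
Definition conv (f g : H -> H) (x : H) : H :=
  \sum_(m <- msupp x) mcoeff m x *: \sum_(ab <- DeltaMon m) f ab.1 * g ab.2.

(* Counit: the algebra homomorphism killing all generators, i.e. the
   coefficient of the empty monomial. *)
Definition counit (x : H) : complex R := mcoeff (mone : {fmonom (IPGen N)}) x.

(* S is an antipode: a linear map that is a two-sided convolution inverse
   of the identity (such a map is unique). *)
Definition is_antipode (S : {linear H -> H}) : Prop :=
  forall x : H, conv S id x = counit x *: 1 /\ conv id S x = counit x *: 1.

Inductive ptree : Type := PNode of 'I_N & seq ptree.

Definition pcolor (T : ptree) : 'I_N := let: PNode c _ := T in c.

Fixpoint pleaves (T : ptree) : seq 'I_N :=
  let: PNode c ts := T in
  if ts is [::] then [:: c] else flatten (map pleaves ts).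

Fixpoint preduced (T : ptree) : bool :=
  let: PNode c ts := T in (size ts != 1%N) && all preduced ts.

Fixpoint pinner (T : ptree) : nat :=
  let: PNode c ts := T in
  if ts is [::] then 0%N else (sumn (map pinner ts)).+1.

(* Lambda_{up r}(T): product of Y(x) over non-leaf vertices x in the
   order <_r (postorder, children visited from right to left, root last). *)
Fixpoint Lambda_r (T : ptree) : H :=
  let: PNode c ts := T in
  if ts is [::] then 1
  else (\prod_(y <- rev (map Lambda_r ts)) y) * Yw c (map pcolor ts).

Definition RT (i : 'I_N) (u : seq 'I_N) (T : ptree) : Prop :=
  preduced T /\ pcolor T = i /\ pleaves T = u.

End IPHopf.

(* Write S' for the right-hand side, extended anti-multiplicatively to monomials
   and linearly to H.  Removing the root of a reduced tree leaves reduced trees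
   whose leaf words cut u into at least two intervals, whence the recursion
     S'(Y_u^i) = - sum_{q >= 2, C_1 < ... < C_q, v}
                   S'(Y_{u|C_1}^{v(1)} ... Y_{u|C_q}^{v(q)}) Y_v^i.
   It says that mu o (S' (x) id) o Delta vanishes on the generators; as Delta is
   multiplicative and S' anti-multiplicative, S' is then a left convolution
   inverse of id on all monomials.  So is the antipode S.  Give Y_u^i the weight
   |u| - 1: apart from m (x) 1 itself, every term of Delta(m) has a left factor
   that is 0 or of smaller weight, or a right factor 0, so comparing the two
   identities on a monomial m proves S(m) = S'(m) by induction on its weight. *)

From HB Require Import structures.
From mathcomp Require Import all_boot all_order all_algebra.
From mathcomp Require Import reals complex finmap monalg.
From Stdlib Require List.
From mathcomp Require Import zify.
Set Implicit Arguments. Unset Strict Implicit. Unset Printing Implicit Defensive.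
Import GRing.Theory Num.Theory.
Local Open Scope ring_scope.

Lemma In_mem (T : eqType) (x : T) (s : seq T) : List.In x s <-> x \in s.
Proof.
elim: s => [|y s IH] //=; rewrite in_cons; split.
- by case=> [->|/IH ->]; rewrite ?eqxx ?orbT.
- by case/orP => [/eqP ->|/IH]; [left|right].
Qed.

Lemma NoDup_uniq (T : eqType) (s : seq T) : List.NoDup s -> uniq s.
Proof.
elim: s => [|x s IH] //= /List.NoDup_cons_iff[xs /IH ->].
by rewrite andbT; apply/negP => /In_mem.
Qed.

Lemma uniq_flatten_map (A B C : eqType) (F : B -> seq A) (key : A -> C)
    (h : B -> C) (s : seq B) :
  uniq (map h s) -> {in s, forall b, uniq (F b)} ->
  {in s, forall b, {in F b, forall a, key a = h b}} ->
  uniq (flatten (map F s)).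
Proof.
elim: s => [|b s IH] //= /andP[hb us] Fu Fk.
rewrite cat_uniq Fu ?mem_head // IH //; last 2 first.
- by move=> b' b's; apply: Fu; rewrite in_cons b's orbT.
- by move=> b' b's; apply: Fk; rewrite in_cons b's orbT.
rewrite andbT; apply/hasPn => a /flatten_mapP[b' b's aFb']; apply/negP => aFb.
move: hb; rewrite -(Fk b (mem_head _ _) a aFb).
by rewrite (Fk b' _ a aFb') ?(map_f h b's) // in_cons b's orbT.
Qed.

Lemma uniq_seq1 (T : eqType) (s : seq T) (a : T) :
  uniq s -> a \in s -> {in s, forall x, x = a} -> s = [:: a].
Proof.
case: s => [|x [|y s]] //=; first by move=> _ _ /(_ x (mem_head _ _)) ->.
by move=> /andP[+ _] _ H; rewrite (H x (mem_head _ _)) (H y) ?inE ?eqxx ?orbT.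
Qed.

Lemma all2_mapr (A B C : Type) (r : A -> C -> bool) (f : B -> C) s t :
  all2 r s (map f t) = all2 (fun x y => r x (f y)) s t.
Proof. by elim: s t => [|x s IH] [|y t] //=; rewrite IH. Qed.

Lemma all2_zip_map (A B C : Type) (r : A -> B * C -> bool) f g s :
  all2 r s (zip (map f s) (map g s)) = all (fun x => r x (f x, g x)) s.
Proof. by elim: s => //= x s ->. Qed.

Section Choices.
Variable A : Type.

Fixpoint choices (Ls : seq (seq A)) : seq (seq A) :=
  if Ls is L :: Ls' then [seq x :: xs | x <- L, xs <- choices Ls'] else [:: [::]].

Lemma big_choices_rev (R : pzSemiRingType) (Ls : seq (seq A)) (f : A -> R) :
  \sum_(ts <- choices Ls) \prod_(t <- rev ts) f t =
  \prod_(L <- rev Ls) \sum_(t <- L) f t.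
Proof.
elim: Ls => [|L Ls IH] /=; first by rewrite big_seq1 !big_nil.
rewrite big_allpairs_dep rev_cons -cats1 big_cat big_seq1 /= mulr_sumr.
apply: eq_bigr => x _; rewrite -IH mulr_suml; apply: eq_bigr => xs _.
by rewrite rev_cons -cats1 big_cat big_seq1.
Qed.

End Choices.

Lemma mem_choices (A : eqType) (Ls : seq (seq A)) ts :
  (ts \in choices Ls) = all2 (fun t L => t \in L) ts Ls.
Proof.
elim: Ls ts => [|L Ls IH] [|t ts] //=.
- by apply/allpairsP => -[[x xs] [_ _]].
apply/allpairsP/andP => [[[x xs] [xL xsC [-> ->]]]|[tL tsC]].
  by split=> //; move: xsC; rewrite IH.
by exists (t, ts); split=> //; rewrite IH.
Qed.

Lemma choices_uniq (A : eqType) (Ls : seq (seq A)) :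
  all uniq Ls -> uniq (choices Ls).
Proof.
elim: Ls => [|L Ls IH] //= /andP[uL uLs].
by apply: allpairs_uniq => //; [exact: IH | move=> [x xs] [y ys] _ _ [-> ->]].
Qed.

Section Splits.
Variable T : eqType.
Implicit Types (u : seq T) (ps : seq (seq T)).

Lemma mem_splits u ps :
  (ps \in splits u) = (flatten ps == u) && all (fun p => p != [::]) ps.
Proof.
elim: u ps => [|x u IH] ps /=.
  rewrite inE; apply/eqP/andP => [->//|[]].
  by case: ps => [|[|y p] ps].
apply/flatten_mapP/andP => [[qs]|[/eqP fps nps]].
  rewrite IH => /andP[/eqP <- nq]; rewrite inE => /orP[/eqP -> /=|].
    by rewrite eqxx nq.
  case: qs nq => [|q qs] //= /andP[_ nqs]; rewrite inE => /eqP -> /=.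
  by rewrite eqxx nqs.
case: ps fps nps => [|[|y p] ps] //= [<- fps] nps.
case: p fps => [|z p] /= fps.
  by exists ps; rewrite ?mem_head // IH fps eqxx.
exists ((z :: p) :: ps); last by rewrite !inE eqxx orbT.
by rewrite IH /= fps eqxx.
Qed.

Lemma splits_uniq u : uniq (splits u).
Proof.
pose unsplit (qs : seq (seq T)) :=
  if qs is (_ :: p) :: r then (if p is [::] then r else p :: r) else [::].
elim: u => [|x u IH] //=.
apply: (@uniq_flatten_map _ _ _ _ unsplit id); first by rewrite map_id.
- move=> ps; rewrite mem_splits => /andP[_].
  case: ps => [|[|y p] r] //= _; rewrite andbT inE.
  by apply/negP => /eqP [].
- move=> ps; rewrite mem_splits => /andP[_ nps] qs.
  rewrite inE => /orP[/eqP -> //|].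
  by case: ps nps => [|[|y p] r] //=; rewrite inE => _ /eqP ->.
Qed.

Lemma splits_piece_lt u ps p :
  ps \in splits u -> (1 < size ps)%N -> p \in ps -> (size p < size u)%N.
Proof.
rewrite mem_splits => /andP[/eqP <- nps] ps2 pps.
rewrite size_flatten (perm_sumn (perm_map size (perm_to_rem pps))) /= -addn1 leq_add2l.
have : (0 < size (rem p ps))%N by rewrite size_rem //; case: (size ps) ps2.
case E: (rem p ps) => [|q r] //= _; rewrite addn_gt0 lt0n size_eq0.
by move/allP: nps => ->; rewrite // (mem_rem (x := p)) // E mem_head.
Qed.

Lemma splits_single u : u != [::] ->
  [seq ps <- splits u | ~~ (1 < size ps)%N] = [:: [:: u]].
Proof.
move=> u0; apply: uniq_seq1; first by rewrite filter_uniq // splits_uniq.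
  by rewrite mem_filter mem_splits /= cats0 eqxx u0.
move=> ps; rewrite mem_filter mem_splits => /and3P[ps1 /eqP fps _].
case: ps ps1 fps => [|p [|q r]] //= _; first by move=> u_nil; rewrite -u_nil in u0.
by rewrite cats0 => ->.
Qed.

Lemma sum_size_pred ps : all (fun p => p != [::]) ps ->
  (\sum_(p <- ps) (size p).-1 + size ps)%N = size (flatten ps).
Proof.
elim: ps => [|p ps IH]; first by rewrite big_nil.
by case: p => //= x p /IH; rewrite big_cons size_cat /=; lia.
Qed.

End Splits.

Lemma prodr_sign (R : pzRingType) (X : Type) (s : seq X) (e : X -> nat) (F : X -> R) :
  \prod_(x <- s) ((-1) ^+ e x * F x) = (-1) ^+ (\sum_(x <- s) e x) * \prod_(x <- s) F x.
Proof.
elim: s => [|x s IH]; first by rewrite !big_nil mulr1.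
rewrite !big_cons IH exprD -!mulrA; congr (_ * _).
by rewrite !mulrA; congr (_ * _); apply: commr_sign.
Qed.

Lemma big_tnth_zip (R : pzSemiRingType) (A B : Type) (a0 : A) (F : A -> B -> R)
    (bs : seq B) (b0 : B) (v : (size bs).-tuple A) :
  \prod_(k < size bs) F (tnth v k) (nth b0 bs k) = \prod_(x <- zip v bs) F x.1 x.2.
Proof.
rewrite (big_nth (a0, b0)) size_zip size_tuple minnn big_mkord.
by apply: eq_bigr => k _; rewrite nth_zip ?size_tuple // (tnth_nth a0).
Qed.

Lemma mulrA_mid (R : pzSemiRingType) (x y z t : R) : x * y * (z * t) = x * (y * z) * t.
Proof. by rewrite !mulrA. Qed.

Lemma malg_mulrn_eq0 (K : choiceType) (C : numDomainType) (x : {malg C[K]}) n :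
  (0 < n)%N -> x *+ n = 0 -> x = 0.
Proof.
move=> n0 xn0; apply/malgP => k; rewrite mcoeff0.
have := congr1 (mcoeff k) xn0; rewrite mcoeffMn mcoeff0 => /eqP.
by rewrite mulrn_eq0 gtn_eqF //= => /eqP.
Qed.

Section PlanarTrees.
Variable N : nat.
Implicit Types (c : 'I_N) (w : seq 'I_N) (t : ptree N).
Local Notation preduced := (@preduced N).
Local Notation pcolor := (@pcolor N).
Local Notation pleaves := (@pleaves N).

Definition ptree_ind_In (P : ptree N -> Prop)
    (IH : forall c ts, (forall t, List.In t ts -> P t) -> P (PNode c ts)) :
  forall t, P t :=
  fix F t := let: PNode c ts := t in
    IH c ts ((fix G ts : forall t, List.In t ts -> P t :=
      match ts with
      | [::] => fun t (h : List.In t [::]) => False_ind _ h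
      | t0 :: ts' => fun t h =>
          match h with
          | or_introl e => eq_ind t0 P (F t0) t e
          | or_intror h' => G ts' t h'
          end
      end) ts).

Fixpoint ptree_encode t : GenTree.tree 'I_N :=
  let: PNode c ts := t in GenTree.Node 0 (GenTree.Leaf c :: map ptree_encode ts).

Fixpoint ptree_decode (x : GenTree.tree 'I_N) : option (ptree N) :=
  if x is GenTree.Node _ (GenTree.Leaf c :: xs)
  then Some (PNode c (pmap ptree_decode xs)) else None.

Lemma ptree_encodeK : pcancel ptree_encode ptree_decode.
Proof.
elim/ptree_ind_In => c ts IH /=; congr (Some (PNode c _)).
elim: ts IH => [|t ts IHts] //= IH.
by rewrite (IH t (or_introl erefl)) /= IHts // => t' h; apply: IH; right.
Qed.

HB.instance Definition _ := Countable.copy (ptree N) (pcan_type ptree_encodeK).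

Lemma pleaves_neq0 t : pleaves t != [::].
Proof.
elim/ptree_ind_In: t => c [|t ts] //= IH.
by rewrite -size_eq0 size_cat addn_eq0 size_eq0 negb_and IH //; left.
Qed.

Definition rtreeb c w t := [&& preduced t, pcolor t == c & pleaves t == w].

Lemma RTP c w t : RT c w t <-> rtreeb c w t.
Proof. by rewrite /rtreeb; split=> [[-> [-> ->]]|/and3P[? /eqP ? /eqP ?]]; rewrite ?eqxx. Qed.

(* Grafting: a root of color c over at least two subtrees drawn from sub, whose
   leaf words cut w into consecutive intervals and whose root colors are v. *)
Definition rnodes (sub : 'I_N -> seq 'I_N -> seq (ptree N)) c w :=
  flatten [seq flatten [seq [seq PNode c ts | ts <- choices [seq sub x.1 x.2 | x <- zip v ps]]
                       | v : (size ps).-tuple 'I_N]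
          | ps <- [seq ps <- splits w | (1 < size ps)%N]].

(* Enumerates RT_w^c without repetition as soon as size w <= n (rtrees_uniq,
   mem_rtrees); the fuel n only makes the recursion structural. *)
Fixpoint rtrees n c w : seq (ptree N) :=
  if n is n'.+1 then
    if w is [:: x] then (if c == x then [:: PNode c [::]] else [::])
    else rnodes (rtrees n') c w
  else [::].

Lemma rtrees_rnodes n c w : size w != 1%N -> rtrees n.+1 c w = rnodes (rtrees n) c w.
Proof. by case: w => [|x [|y w]]. Qed.

Section Nodes.
Variable sub : 'I_N -> seq 'I_N -> seq (ptree N).
Hypothesis sub_sound : forall c w t, t \in sub c w -> rtreeb c w t.

Lemma mem_rnodes c w t :
  t \in rnodes sub c w <->
  exists ps (v : (size ps).-tuple 'I_N) ts,
    [/\ ps \in splits w, (1 < size ps)%N,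
        ts \in choices [seq sub x.1 x.2 | x <- zip v ps] & t = PNode c ts].
Proof.
split.
  case/flatten_mapP => ps; rewrite mem_filter => /andP[ps2 psw].
  by case/flatten_mapP => v _ /mapP[ts tsin ->]; exists ps, v, ts.
case=> ps [v [ts [psw ps2 tsin ->]]].
apply/flatten_mapP; exists ps; first by rewrite mem_filter ps2.
by apply/flatten_mapP; exists v; rewrite ?mem_enum ?map_f.
Qed.

Lemma choices_subtrees (v : seq 'I_N) (ps : seq (seq 'I_N)) ts :
  size v = size ps -> ts \in choices [seq sub x.1 x.2 | x <- zip v ps] ->
  [/\ all preduced ts, map pcolor ts = v & map pleaves ts = ps].
Proof.
rewrite mem_choices all2_mapr.
elim: ts v ps => [|t ts IH] [|c v] [|w ps] //= [szv].
case/andP => /sub_sound/and3P[rt /eqP-> /eqP->] /(IH _ _ szv)[rts -> ->].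
by rewrite rt rts.
Qed.

Lemma rnodes_sound c w t : t \in rnodes sub c w -> rtreeb c w t.
Proof.
case/mem_rnodes => ps [v [ts [psw ps2 tsin ->]]].
have [rts _ lts] := choices_subtrees (size_tuple v) tsin.
move: psw; rewrite mem_splits /rtreeb /= rts eqxx andbT => /andP[/eqP <- _].
case: ts lts {rts tsin} => [|t' ts] lts; first by move: ps2; rewrite -lts.
by move: ps2; rewrite -lts /= size_map eqxx andbT; case: (ts).
Qed.

Lemma rnodes_uniq c w : (forall c w, uniq (sub c w)) -> uniq (rnodes sub c w).
Proof.
move=> sub_uniq; pose kids t := let: PNode _ ts := t in ts.
have kidsP ps (v : (size ps).-tuple 'I_N) :
    {in [seq PNode c ts | ts <- choices [seq sub x.1 x.2 | x <- zip v ps]],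
     forall t, map pcolor (kids t) = v /\ map pleaves (kids t) = ps}.
  move=> _ /mapP[ts tsin ->].
  by have [_ -> ->] := choices_subtrees (size_tuple v) tsin.
apply: (@uniq_flatten_map _ _ _ _ (fun t => map pleaves (kids t)) id).
- by rewrite map_id filter_uniq // splits_uniq.
- move=> ps _; apply: (@uniq_flatten_map _ _ _ _ (fun t => map pcolor (kids t)) val).
  + by rewrite map_inj_uniq ?enum_uniq //; apply: val_inj.
  + move=> v _; rewrite map_inj_uniq; last by move=> ? ? [].
    by apply: choices_uniq; apply/allP => L /mapP[x _ ->].
  + by move=> v _ t /kidsP[].
- by move=> ps _ t /flatten_mapP[v _ /kidsP[]].
Qed.

End Nodes.

Lemma rtrees_sound n c w t : t \in rtrees n c w -> rtreeb c w t.
Proof.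
elim: n c w t => [|n IH] c w t //.
case: w => [|x [|y w]]; try exact: rnodes_sound.
by rewrite /=; case: eqP => // <-; rewrite inE => /eqP ->; rewrite /rtreeb /= !eqxx.
Qed.

Lemma rtrees_uniq n c w : uniq (rtrees n c w).
Proof.
elim: n c w => [|n IH] c w //.
case: w => [|x [|y w]]; try exact: rnodes_uniq (@rtrees_sound n) _ _ IH.
by rewrite /=; case: eqP.
Qed.

Lemma rtrees_complete n c w t : rtreeb c w t -> (size w <= n)%N -> t \in rtrees n c w.
Proof.
elim/ptree_ind_In: t n c w => c' ts IH n c w /and3P[/= /andP[ts1 rts] /eqP <- /eqP <-].
case: ts => [|t0 ts'] in IH ts1 rts *; first by case: n => //= n _; rewrite eqxx mem_head.
set ts := t0 :: ts' in IH ts1 rts *; set ps := map pleaves ts.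
have ps2 : (1 < size ps)%N by rewrite size_map ltn_neqAle eq_sym ts1.
have psw : ps \in splits (flatten ps).
  by rewrite mem_splits eqxx; apply/allP => _ /mapP[t _ ->]; apply: pleaves_neq0.
have pieces_lt t : t \in ts -> (size (pleaves t) < size (flatten ps))%N.
  by move=> tts; apply: splits_piece_lt psw ps2 (map_f _ tts).
have w2 : (1 < size (flatten ps))%N.
  by apply: leq_ltn_trans (pieces_lt t0 (mem_head _ _)); rewrite lt0n size_eq0 pleaves_neq0.
case: n => [|n] hn; first by move: w2; rewrite ltnNge (leq_trans hn).
rewrite rtrees_rnodes ?neq_ltn ?w2 ?orbT //.
have szv : size (map pcolor ts) == size ps by rewrite !size_map.
apply/mem_rnodes; exists ps, (Tuple szv), ts; split=> //.
rewrite mem_choices all2_mapr all2_zip_map; apply/allP => t tts.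
apply: IH; first exact/In_mem.
- by rewrite /rtreeb !eqxx (allP rts).
- by rewrite -ltnS (leq_trans (pieces_lt t tts)).
Qed.

Lemma mem_rtrees n c w t :
  (size w <= n)%N -> (t \in rtrees n c w) = rtreeb c w t.
Proof.
by move=> hn; apply/idP/idP => [/rtrees_sound|/rtrees_complete]; apply.
Qed.

Lemma perm_rtrees n c w (s : seq (ptree N)) :
  uniq s -> (forall t, (t \in s) = rtreeb c w t) -> (size w <= n)%N ->
  perm_eq s (rtrees n c w).
Proof.
move=> us sP hn; apply: uniq_perm => // [|t]; first exact: rtrees_uniq.
by rewrite sP mem_rtrees.
Qed.

Lemma perm_RT c w (rts : seq (ptree N)) :
  List.NoDup rts -> (forall t, List.In t rts <-> RT c w t) ->
  perm_eq rts (rtrees (size w) c w).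
Proof.
move=> /NoDup_uniq rts_uniq rtsP; apply: perm_rtrees => // t.
by apply/idP/idP => [/In_mem/rtsP/RTP|/RTP/rtsP/In_mem].
Qed.

End PlanarTrees.

Section TreeAntipode.
Variables (N : nat) (R : realType).
Local Notation H := (IPH N R).
Local Notation G := (IPGen N).
Local Notation M := {fmonom G}.
Local Notation Yw := (Yw R).
Implicit Types (i x : 'I_N) (w : seq 'I_N) (m : M).

Definition weight (m : M) : nat := sumn [seq (size (val g).2).-1 | g <- fmonom_val m].

Lemma weightM (m1 m2 : M) : weight (mmul m1 m2) = (weight m1 + weight m2)%N.
Proof. by rewrite /weight fmM map_cat sumn_cat. Qed.

Lemma weight1 : weight (mone : M) = 0%N.
Proof. by rewrite /weight fm1. Qed.

Lemma weightU (g : G) : weight (fmu g) = (size (val g).2).-1.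
Proof. by rewrite /weight fmU /= addn0. Qed.

Lemma malgUM (m1 m2 : M) : << m1 >> * << m2 >> = << (mmul m1 m2) >> :> H.
Proof. by rewrite malgM_def fgmulUU mulr1. Qed.

Lemma malgU1 : << (mone : M) >> = 1 :> H.
Proof. by rewrite -mpolyC1E. Qed.

Lemma Yw_fmu i w (w2 : (1 < size w)%N) : Yw i w = << fmu (exist _ (i, w) w2 : G) >>.
Proof.
rewrite /Yw; case: insubP => [g _ gv|]; last by rewrite /= w2.
by congr << fmu _ >>; apply: val_inj.
Qed.

Lemma Yw1 i x : Yw i [:: x] = (i == x)%:R.
Proof. by rewrite /Yw insubF. Qed.

Lemma Yw0 i : Yw i [::] = 0.
Proof. by rewrite /Yw insubF. Qed.

Definition monom_or0 (d : nat) (x : H) :=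
  x = 0 \/ exists2 m, x = << m >> & weight m = d.

Lemma monom_or0M dx dy (x y : H) :
  monom_or0 dx x -> monom_or0 dy y -> monom_or0 (dx + dy) (x * y).
Proof.
case=> [->|[m1 -> <-]]; first by left; rewrite mul0r.
case=> [->|[m2 -> <-]]; first by left; rewrite mulr0.
by right; exists (mmul m1 m2); rewrite ?malgUM ?weightM.
Qed.

Lemma Yw_monom_or0 i w : monom_or0 (size w).-1 (Yw i w).
Proof.
case: w => [|x [|y w]]; first by left; rewrite Yw0.
  by rewrite Yw1; case: eqP; [right; exists (mone : M); rewrite ?malgU1 ?weight1 | left].
by right; exists (fmu (exist _ (i, [:: x, y & w]) isT : G)); rewrite ?Yw_fmu ?weightU.
Qed.

Lemma prod_Yw_monom_or0 (s : seq ('I_N * seq 'I_N)) :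
  monom_or0 (\sum_(x <- s) (size x.2).-1) (\prod_(x <- s) Yw x.1 x.2).
Proof.
elim: s => [|x s IH]; last by rewrite !big_cons; apply: monom_or0M (Yw_monom_or0 _ _) IH.
by rewrite !big_nil; right; exists (mone : M); rewrite ?malgU1 ?weight1.
Qed.

Definition tree_term (t : ptree N) : H := (-1) ^+ pinner t * Lambda_r R t.

Definition tree_sum i w : H := \sum_(t <- rtrees (size w) i w) tree_term t.

Definition tree_antipode_mon (m : M) : H :=
  \prod_(g <- rev (fmonom_val m)) tree_sum (val g).1 (val g).2.

Definition tree_antipode (x : H) : H :=
  \sum_(m <- msupp x) x@_m *: tree_antipode_mon m.

Lemma tree_antipode0 : tree_antipode 0 = 0.
Proof. by rewrite /tree_antipode msupp0 big_seq_fset0. Qed.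

Lemma tree_antipodeU m : tree_antipode << m >> = tree_antipode_mon m.
Proof. by rewrite /tree_antipode msuppU1 big_seq_fset1 mcoeffUU scale1r. Qed.

Lemma tree_antipode1 : tree_antipode 1 = 1.
Proof. by rewrite -malgU1 tree_antipodeU /tree_antipode_mon fm1 big_nil. Qed.

Lemma tree_antipodeM dx dy (x y : H) : monom_or0 dx x -> monom_or0 dy y ->
  tree_antipode (x * y) = tree_antipode y * tree_antipode x.
Proof.
case=> [->|[m1 -> _]]; first by rewrite mul0r tree_antipode0 mulr0.
case=> [->|[m2 -> _]]; first by rewrite mulr0 tree_antipode0 mul0r.
by rewrite malgUM !tree_antipodeU /tree_antipode_mon fmM rev_cat big_cat.
Qed.

Lemma tree_sum_fuel n i w : (size w <= n)%N ->
  \sum_(t <- rtrees n i w) tree_term t = tree_sum i w.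
Proof.
move=> hn; apply: perm_big; apply: perm_rtrees (leqnn _); first exact: rtrees_uniq.
by move=> t; rewrite mem_rtrees.
Qed.

Lemma tree_antipode_Yw i w : tree_antipode (Yw i w) = tree_sum i w.
Proof.
case: w => [|x [|y w]]; first by rewrite Yw0 tree_antipode0 /tree_sum big_nil.
  rewrite Yw1 /tree_sum [rtrees _ _ _]/=; case: (i == x).
    by rewrite mulr1n tree_antipode1 big_seq1 /tree_term [pinner _]/= [Lambda_r _ _]/= mulr1.
  by rewrite mulr0n tree_antipode0 big_nil.
by rewrite (@Yw_fmu i [:: x, y & w] isT) tree_antipodeU /tree_antipode_mon fmU big_seq1.
Qed.

Lemma tree_antipode_prod_Yw (s : seq ('I_N * seq 'I_N)) :
  tree_antipode (\prod_(x <- s) Yw x.1 x.2) = \prod_(x <- rev s) tree_sum x.1 x.2.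
Proof.
elim: s => [|x s IH]; first by rewrite !big_nil tree_antipode1.
rewrite big_cons (tree_antipodeM (Yw_monom_or0 _ _) (prod_Yw_monom_or0 _)) IH.
by rewrite rev_cons -cats1 big_cat big_seq1 tree_antipode_Yw.
Qed.

Lemma tree_term_node c ts : ts != [::] ->
  tree_term (PNode c ts) = - (\prod_(t <- rev ts) tree_term t) * Yw c (map (@pcolor N) ts).
Proof.
move=> ts0; rewrite /tree_term prodr_sign big_rev.
have -> : pinner (PNode c ts) = (sumn (map (@pinner N) ts)).+1 by case: ts ts0.
have -> : Lambda_r R (PNode c ts) =
    (\prod_(y <- rev (map (Lambda_r R) ts)) y) * Yw c (map (@pcolor N) ts).
  by case: ts ts0.
by rewrite sumnE !big_map -map_rev big_map exprS mulN1r !mulNr mulrA.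
Qed.

(* Remove the root: its children are reduced trees, and summing over them factors
   as a product of tree sums (big_choices_rev). *)
Lemma tree_sum_rec i u : (1 < size u)%N ->
  tree_sum i u = - \sum_(ps <- splits u | (1 < size ps)%N) \sum_(v : (size ps).-tuple 'I_N)
                     tree_antipode (\prod_(x <- zip v ps) Yw x.1 x.2) * Yw i v.
Proof.
move=> u2; have [n un] : exists n, size u = n.+1 by exists (size u).-1; lia.
rewrite /tree_sum un rtrees_rnodes -?un; last by rewrite neq_ltn u2 orbT.
rewrite /rnodes big_flatten big_map big_filter -sumrN big_seq_cond [RHS]big_seq_cond.
apply: eq_bigr => ps /andP[psu ps2]; rewrite big_flatten big_image -sumrN.
apply: eq_bigr => v _; rewrite big_map.
rewrite (eq_big_seq (fun ts => - (\prod_(t <- rev ts) tree_term t) * Yw i v)); last first.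
  move=> ts tsin; have [_ cts lts] := choices_subtrees (@rtrees_sound N n) (size_tuple v) tsin.
  by rewrite tree_term_node ?cts //; apply: contraTneq ps2 => ts0; rewrite -lts ts0.
rewrite -mulr_suml sumrN big_choices_rev mulNr -map_rev big_map tree_antipode_prod_Yw.
congr (- (_ * _)); apply: eq_big_seq => x; rewrite mem_rev => /(map_f snd).
rewrite -/(unzip2 _) unzip2_zip ?size_tuple // => xps; apply: tree_sum_fuel.
by rewrite -ltnS -un (splits_piece_lt psu ps2 xps).
Qed.

Lemma tree_antipode_DeltaGen i u : (1 < size u)%N ->
  \sum_(ab <- DeltaGen R i u) tree_antipode ab.1 * ab.2 = 0.
Proof.
move=> u2; rewrite /DeltaGen big_flatten big_map.
rewrite (eq_bigr (fun ps => \sum_(v : (size ps).-tuple 'I_N)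
    tree_antipode (\prod_(x <- zip v ps) Yw x.1 x.2) * Yw i v)); last first.
  by move=> ps _; rewrite big_image; apply: eq_bigr => v _; rewrite (big_tnth_zip i).
rewrite (bigID (fun ps => (1 < size ps)%N)) /= -[X in X + _]opprK -tree_sum_rec //.
apply/eqP; rewrite addrC subr_eq0; apply/eqP.
rewrite -big_filter splits_single; last by case: (u) u2.
rewrite big_seq1 (bigD1 [tuple i]) //= [X in _ + X]big1 => [|v vi].
  by rewrite big_seq1 tree_antipode_Yw Yw1 eqxx mulr1 addr0.
case: v vi => -[|x [|y s]] // v1; rewrite Yw1.
by case: (eqVneq i x) => [<- /eqP[]|_ _]; [exact: val_inj | rewrite mulr0n mulr0].
Qed.

Definition delta_shaped m (ab : H * H) :=
  ab.1 = 0 \/ exists2 m', ab.1 = << m' >> &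
    [\/ ab.2 = 0, (weight m' < weight m)%N | m' = m /\ ab.2 = 1].

Lemma delta_shapedM m1 m2 (a b : H * H) :
  delta_shaped m1 a -> delta_shaped m2 b ->
  delta_shaped (mmul m1 m2) (a.1 * b.1, a.2 * b.2).
Proof.
case=> [/= ->|[m1' /= -> c1]]; first by left; rewrite mul0r.
case=> [/= ->|[m2' /= -> c2]]; first by left; rewrite mulr0.
right; exists (mmul m1' m2'); rewrite ?malgUM //= !weightM.
case: c1 => [->|lt1|[-> ->]]; first by constructor 1; rewrite mul0r.
  case: c2 => [->|lt2|[-> _]]; first by constructor 1; rewrite mulr0.
  - by constructor 2; lia.
  - by constructor 2; lia.
case: c2 => [->|lt2|[-> ->]]; first by constructor 1; rewrite mulr0.
  by constructor 2; lia.
by constructor 3; rewrite mulr1.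
Qed.

Lemma DeltaGen_shaped (g : G) ab :
  ab \in DeltaGen R (val g).1 (val g).2 -> delta_shaped (fmu g) ab.
Proof.
case: g => -[i u] /= u2; case/flatten_mapP => ps psu /mapP[v _ ->].
rewrite (big_tnth_zip i); have [ps2|ps1] := ltnP 1 (size ps).
  case: (prod_Yw_monom_or0 (zip v ps)) => [->|[m' -> wm']]; [by left | right].
  exists m' => //; constructor 2; rewrite weightU /= wm'.
  rewrite -(big_map snd xpredT (fun p => (size p).-1)) -/(unzip2 _) unzip2_zip ?size_tuple //.
  move: psu; rewrite mem_splits => /andP[/eqP <- /sum_size_pred <-].
  by case: (size ps) ps2 => [|[|k]] // _; rewrite !addnS /= ltnS leq_addr.
have : ps \in [seq ps <- splits u | ~~ (1 < size ps)%N] by rewrite mem_filter -leqNgt ps1.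
rewrite splits_single; last by case: (u) u2.
rewrite inE => /eqP ps_u; subst ps; case: v => -[|x [|y s]] // v1.
rewrite [zip _ _]/= big_seq1 Yw1; case: (eqVneq i x) => [<-|_].
  by right; exists (fmu (exist _ (i, u) u2)); [exact: Yw_fmu | constructor 3].
case: (Yw_monom_or0 x u) => [->|[m' -> _]]; [by left | right; exists m' => //].
by constructor 1; rewrite /= mulr0n.
Qed.

Lemma DeltaGen_top (g : G) : (<< fmu g >>, 1) \in DeltaGen R (val g).1 (val g).2.
Proof.
case: g => -[i u] /= u2; apply/flatten_mapP; exists [:: u].
  by rewrite mem_splits /= cats0 eqxx andbT; case: (u) u2.
apply/mapP; exists [tuple i]; first by rewrite mem_enum.
by rewrite big_ord1 (tnth_nth i) /= Yw1 eqxx (Yw_fmu i u2).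
Qed.

Lemma FMonom_nil : FMonom [::] = mone :> M.
Proof. by apply/eqP; rewrite fmP fm1. Qed.

Lemma FMonom_cons (g : G) gs : FMonom (g :: gs) = mmul (fmu g) (FMonom gs) :> M.
Proof. by apply/eqP; rewrite fmP fmM fmU. Qed.

Lemma DeltaMon_shaped m ab : ab \in DeltaMon R m -> delta_shaped m ab.
Proof.
case: m => gs; elim: gs ab => [|g gs IH] ab.
  rewrite inE => /eqP ->; right; exists (mone : M); rewrite ?FMonom_nil ?malgU1 //.
  by constructor 3.
case/allpairsP => -[a b] [/DeltaGen_shaped ga /IH gsb ->].
by rewrite FMonom_cons; apply: delta_shapedM.
Qed.

Lemma DeltaMon_top m : (<< m >>, 1) \in DeltaMon R m.
Proof.
case: m => gs; elim: gs => [|g gs IH]; first by rewrite {1}FMonom_nil malgU1 inE.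
apply/allpairsP; exists ((<< fmu g >>, 1), (<< FMonom gs >>, 1)).
by rewrite DeltaGen_top IH FMonom_cons malgUM mulr1.
Qed.

Lemma delta_shaped_monom m ab : delta_shaped m ab -> exists d, monom_or0 d ab.1.
Proof.
by case=> [->|[m' -> _]]; [exists 0%N; left | exists (weight m'); right; exists m'].
Qed.

Lemma convU (f g : H -> H) m : conv f g << m >> = \sum_(ab <- DeltaMon R m) f ab.1 * g ab.2.
Proof. by rewrite /conv msuppU1 big_seq_fset1 mcoeffUU scale1r. Qed.

Lemma conv_tree_antipode_id m : conv tree_antipode id << m >> = (m == mone)%:R.
Proof.
rewrite convU; case: m => -[|g gs].
  by rewrite [DeltaMon _ _]/= big_seq1 tree_antipode1 mulr1 FMonom_nil eqxx.
have -> : (FMonom (g :: gs) == mone :> M) = false by rewrite fmP fm1.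
change (DeltaMon R (FMonom (g :: gs))) with
  (tensor_mul (DeltaGen R (val g).1 (val g).2) (DeltaMon R (FMonom gs))).
rewrite /tensor_mul big_allpairs_dep exchange_big big1_seq // => b.
case/andP=> _ /DeltaMon_shaped/delta_shaped_monom[db hb].
rewrite (eq_big_seq (fun a => tree_antipode b.1 * (tree_antipode a.1 * a.2) * b.2)).
  by rewrite -mulr_suml -mulr_sumr tree_antipode_DeltaGen ?(valP g) // mulr0 mul0r.
move=> a /DeltaGen_shaped/delta_shaped_monom[da ha].
by rewrite /= (tree_antipodeM ha hb); apply: mulrA_mid.
Qed.

Lemma conv_antipodeB_tree (S : {linear H -> H}) m : is_antipode S ->
  \sum_(ab <- DeltaMon R m) (S ab.1 - tree_antipode ab.1) * ab.2 = 0.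
Proof.
case/(_ << m >>) => convS _.
rewrite convU /counit mcoeffU1 scaler_nat -conv_tree_antipode_id convU in convS.
rewrite [X in X = _](eq_bigr (fun ab => S ab.1 * ab.2)) in convS; last by [].
rewrite (eq_bigr (fun ab => S ab.1 * ab.2 - tree_antipode ab.1 * ab.2)); last first.
  by move=> ab _; rewrite mulrBl.
by rewrite sumrB [X in X - _]convS subrr.
Qed.

Lemma antipode_monomE (S : {linear H -> H}) : is_antipode S ->
  forall m, S << m >> = tree_antipode_mon m.
Proof.
move=> S_anti m; rewrite -tree_antipodeU.
have [n] := ubnP (weight m); elim: n m => // n IH m; rewrite ltnS => wm.
apply/eqP; rewrite -subr_eq0; apply/eqP.
apply: (malg_mulrn_eq0 (n := count_mem (<< m >>, 1) (DeltaMon R m))).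
  by rewrite -has_count has_pred1 DeltaMon_top.
rewrite -[RHS](conv_antipodeB_tree m S_anti) -iter_addr_0 -big_const_seq big_mkcond.
apply: eq_big_seq => -[a b] abm; rewrite /=.
case: ((a, b) =P (<< m >>, 1)) => [[-> ->]|top]; first by rewrite mulr1.
case: (DeltaMon_shaped abm) => [/= ->|[m' /= am' /= [->|lt|[mm' b1]]]].
- by rewrite linear0 tree_antipode0 subrr mul0r.
- by rewrite mulr0.
- by rewrite am' IH ?subrr ?mul0r // (leq_trans lt).
- by case: top; rewrite am' mm' b1.
Qed.

End TreeAntipode.

Theorem corollary3 (N : nat) (R : realType) (S : {linear IPH N R -> IPH N R}) :
  (1 <= N)%N -> is_antipode S ->
  forall (i : 'I_N) (u : seq 'I_N), (2 <= size u)%N ->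
  forall rts : seq (ptree N),
    List.NoDup rts -> (forall T, List.In T rts <-> RT i u T) ->
    S (Yw R i u) = \sum_(T <- rts) (-1) ^+ pinner T * Lambda_r R T.
Proof.
move=> _ S_anti i u u2 rts rts_uniq rtsP.
rewrite (perm_big _ (perm_RT rts_uniq rtsP)) -/(tree_sum R i u).
by rewrite (Yw_fmu R i u2) (antipode_monomE S_anti) /tree_antipode_mon fmU big_seq1.
Qed.
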